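(* Let $\mathcal{U}\subset\Delta(\mathcal{X}\times\mathcal{Y})$ be a convex and compact uncertainty set and let $\mathrm{h}^{\mathcal{U}}$ be an $\ell$-MRC for $\mathcal{U}$. If $\mathcal{U}$ contains the true underlying distribution $\mathrm{p}^*$, then $$\min_{\mathrm{h}\in \mathrm{T}(\mathcal{X},\mathcal{Y})}R_\ell(\mathrm{h})\leq H_\ell(\mathcal{U}),\qquad R_\ell(\mathrm{h}^{\mathcal{U}})\leq H_\ell(\mathcal{U}).$$ In addition, if $\mathrm{p}^*$ maximizes the $\ell$-entropy over $\mathcal{U}$, then $\ell$-MRCs for $\mathcal{U}$ are Bayes classifiers and $$\min_{\mathrm{h}\in \mathrm{T}(\mathcal{X},\mathcal{Y})}R_\ell(\mathrm{h})= R_\ell(\mathrm{h}^{\mathcal{U}})=H_\ell(\mathcal{U}).$$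
   Context: Let $\mathcal{X}$ and $\mathcal{Y}$ be finite nonempty sets, with $\mathcal{Y}=\{1,\dots,|\mathcal{Y}|\}$. For a finite set $\mathcal{Z}$, $\Delta(\mathcal{Z})$ denotes the set of probability distributions on $\mathcal{Z}$. A classification rule is a map $\mathrm{h}$ assigning to each $x\in\mathcal{X}$ a distribution $\mathrm{h}(\cdot|x)\in\Delta(\mathcal{Y})$; $\mathrm{T}(\mathcal{X},\mathcal{Y})$ is the set of all classification rules. A score function $L:\Delta(\mathcal{Y})\times\mathcal{Y}\to(-\infty,\infty]$ is lower semi-continuous and convex in its first argument; the associated classification loss is $\ell(\mathrm{h},(x,y))=L(\mathrm{h}(\cdot|x),y)$, and for $\mathrm{p}\in\Delta(\mathcal{X}\times\mathcal{Y})$, $\ell(\mathrm{h},\mathrm{p})=\sum_{x,y}\mathrm{p}(x,y)\ell(\mathrm{h},(x,y))$. $H_\ell(\mathrm{p})=\min_{\mathrm{h}\in\mathrm{T}(\mathcal{X},\mathcal{Y})}\ell(\mathrm{h},\mathrm{p})$ and $H_\ell(\mathcal{U})=\max_{\mathrm{p}\in\mathcal{U}}H_\ell(\mathrm{p})$. A rule $\mathrm{h}^{\mathcal{U}}$ is an $\ell$-MRC for $\mathcal{U}$ if $\mathrm{h}^{\mathcal{U}}\in\arg\min_{\mathrm{h}}\max_{\mathrm{p}\in\mathcal{U}}\ell(\mathrm{h},\mathrm{p})$. $\mathrm{p}^*\in\Delta(\mathcal{X}\times\mathcal{Y})$ is the true underlying distribution of instance-label pairs, $R_\ell(\mathrm{h})=\ell(\mathrm{h},\mathrm{p}^*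 )$ is the $\ell$-risk, and a Bayes classifier is a rule minimizing $R_\ell$ over $\mathrm{T}(\mathcal{X},\mathcal{Y})$. *)

From HB Require Import structures.
From mathcomp Require Import all_boot all_order all_algebra.
From mathcomp Require Import all_classical all_reals all_analysis.
Import numFieldNormedType.Exports.
Set Implicit Arguments. Unset Strict Implicit. Unset Printing Implicit Defensive.
Import Order.TTheory GRing.Theory Num.Theory.
Local Open Scope classical_set_scope.
Local Open Scope ring_scope.

(* Delta(Z) for a finite set Z: probability distributions on Z, represented
   as real functions Z -> R (product topology on Z -> R). *)
Definition simplex (R : realType) (Z : finType) : set (Z -> R) :=
  [set q | (forall z, 0 <= q z) /\ \sum_(z : Z) q z = 1].

Definition mix (R : realType) (Z : finType) (t : R) (q1 q2 : Z -> R) : Z -> R :=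
  fun z => t * q1 z + (1 - t) * q2 z.

Definition convex_set_of (R : realType) (Z : finType) (U : set (Z -> R)) : Prop :=
  forall q1 q2 t, U q1 -> U q2 -> 0 <= t <= 1 -> U (mix t q1 q2).

Definition lsc_on (R : realType) (T : topologicalType) (D : set T)
    (f : T -> \bar R) : Prop :=
  forall x, D x -> forall a : R, (a%:E < f x)%E ->
    \forall y \near x, D y -> (a%:E < f y)%E.

(* Score function L : Delta(Y) x Y -> (-oo, +oo], lsc and convex in its
   first argument (only values on Delta(Y) matter). *)
Definition score_function (R : realType) (Y : finType)
    (L : (Y -> R) -> Y -> \bar R) : Prop :=
  (forall q y, simplex q -> L q y != -oo%E) /\
  (forall y, lsc_on (T:={ptws Y -> R}) (simplex (R:=R) (Z:=Y)) (fun q => L q y)) /\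
  (forall y q1 q2 t, simplex q1 -> simplex q2 -> 0 <= t <= 1 ->
     (L (mix t q1 q2) y <= t%:E * L q1 y + (1 - t)%:E * L q2 y)%E).

(* T(X,Y): classification rules h, h x = h(.|x) in Delta(Y) *)
Definition rule (R : realType) (X Y : finType) (h : X -> Y -> R) : Prop :=
  forall x, simplex (h x).

(* l(h, p) = sum_{x,y} p(x,y) L(h(.|x), y)   (convention 0 * +oo = 0) *)
Definition loss (R : realType) (X Y : finType) (L : (Y -> R) -> Y -> \bar R)
    (h : X -> Y -> R) (p : X * Y -> R) : \bar R :=
  (\sum_(z : X * Y) (p z)%:E * L (h z.1) z.2)%E.

(* H_l(p) = min_h l(h,p)  (rendered as an infimum over T(X,Y)) *)
Definition entropy (R : realType) (X Y : finType) (L : (Y -> R) -> Y -> \bar R)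
    (p : X * Y -> R) : \bar R :=
  ereal_inf [set loss L h p | h in [set h | rule h]].

(* H_l(U) = max_{p in U} H_l(p)  (rendered as a supremum) *)
Definition entropyU (R : realType) (X Y : finType) (L : (Y -> R) -> Y -> \bar R)
    (U : set (X * Y -> R)) : \bar R :=
  ereal_sup [set entropy L p | p in U].

Definition worst_loss (R : realType) (X Y : finType) (L : (Y -> R) -> Y -> \bar R)
    (U : set (X * Y -> R)) (h : X -> Y -> R) : \bar R :=
  ereal_sup [set loss L h p | p in U].

Definition MRC (R : realType) (X Y : finType) (L : (Y -> R) -> Y -> \bar R)
    (U : set (X * Y -> R)) (h : X -> Y -> R) : Prop :=
  rule h /\ forall h', rule h' -> (worst_loss L U h <= worst_loss L U h')%E.

Definition risk (R : realType) (X Y : finType) (L : (Y -> R) -> Y -> \bar R)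
    (pstar : X * Y -> R) (h : X -> Y -> R) : \bar R := loss L h pstar.

Definition bayes_risk (R : realType) (X Y : finType) (L : (Y -> R) -> Y -> \bar R)
    (pstar : X * Y -> R) : \bar R :=
  ereal_inf [set risk L pstar h | h in [set h | rule h]].

Definition bayes_classifier (R : realType) (X Y : finType)
    (L : (Y -> R) -> Y -> \bar R) (pstar : X * Y -> R) (h : X -> Y -> R) : Prop :=
  rule h /\ forall h', rule h' -> (risk L pstar h <= risk L pstar h')%E.

From HB Require Import structures.
From mathcomp Require Import all_boot all_order all_algebra.
From mathcomp Require Import all_classical all_reals all_analysis.
From mathcomp Require Import ring lra.
From Stdlib Require List.
Import numFieldNormedType.Exports.
Set Implicit Arguments. Unset Strict Implicit. Unset Printing Implicit Defensive.
Import Order.TTheory GRing.Theory Num.Theory.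
Local Open Scope classical_set_scope.
Local Open Scope ring_scope.

(* The Bayes risk is H_l(p* ) <= H_l(U), and R_l(h^U) <= max_{p in U} l(h^U, p),
   so everything reduces to the minimax inequality
     min_h max_{p in U} l(h, p) <= max_{p in U} min_h l(h, p) = H_l(U),
   after which the equality case is immediate.  The loss is convex and lower
   semicontinuous in the rule h, linear in p, and bounded below; the rules form
   a compact convex product of simplices and U is convex.  The minimax
   inequality is proved as in Kneser and Fan: a separation argument in the plane
   handles two distributions, induction on their number handles finitely many,
   and compactness of the set of rules handles all of U. *)

Section ExtendedReals.
Variable R : realType.
Implicit Types (a b c : R) (x y : \bar R).

Lemma lte_fin_dense a x : (a%:E < x)%E -> exists2 b, a < b & (b%:E < x)%E.
Proof.
case: x => [r| |] // ar; last by exists (a + 1); rewrite ?ltey //; lra.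
by rewrite lte_fin in ar; exists ((a + r) / 2); rewrite ?lte_fin; lra.
Qed.

Lemma lte_fin_split b x y : (b%:E < x + y)%E ->
  exists b1 b2, [/\ b1 + b2 = b, (b1%:E < x)%E & (b2%:E < y)%E].
Proof.
case: x => [r| |]; case: y => [s| |] //= bxy.
- rewrite -EFinD lte_fin in bxy.
  by exists (r - (r + s - b) / 2), (s - (r + s - b) / 2); rewrite !lte_fin; split; lra.
- by exists (r - 1), (b - (r - 1)); rewrite ltey lte_fin; split => //; lra.
- by exists (b - (s - 1)), (s - 1); rewrite ltey lte_fin; split => //; lra.
- by exists b, 0; rewrite !ltey; split => //; rewrite addr0.
Qed.

Lemma lte_fin_pmull b c x : 0 < c -> (b%:E < c%:E * x)%E = ((b / c)%:E < x)%E.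
Proof. by move=> c0; rewrite -lte_pdivrMl // -EFinM mulrC. Qed.

Lemma mule_ge0_gtNy c x : 0 <= c -> (-oo < x)%E -> (-oo < c%:E * x)%E.
Proof.
rewrite le_eqVlt => /predU1P[<-|c0]; first by rewrite mul0e ltNy0.
by case: x => [r| |] // _; rewrite ?ltNyr // gt0_muley ?ltey.
Qed.

Lemma gtNy_adde_def x y : (-oo < x)%E -> (-oo < y)%E -> (x +? y)%E.
Proof. by move=> x0 y0; apply: ltninfty_adde_def; rewrite inE. Qed.

Lemma lee_mix_le c x y b : 0 <= c <= 1 -> (x <= b%:E)%E -> (y <= b%:E)%E ->
  (c%:E * x + (1 - c)%:E * y <= b%:E)%E.
Proof.
move=> /andP[c0 c1] xb yb.
have c0' : (0 <= c%:E)%E by rewrite lee_fin.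
have c1' : (0 <= (1 - c)%:E)%E by rewrite lee_fin subr_ge0.
apply: (le_trans (leeD (lee_wpmul2l c0' xb) (lee_wpmul2l c1' yb))).
by rewrite -!EFinM -EFinD lee_fin; lra.
Qed.

Lemma ereal_inf_le_approx (T : Type) (S : set T) (f : T -> \bar R) a d :
  (ereal_inf (f @` S) <= a%:E)%E -> 0 < d -> exists2 x, S x & (f x <= (a + d)%:E)%E.
Proof.
move=> infa d0; have : (ereal_inf (f @` S) < (a + d)%:E)%E.
  by apply: le_lt_trans infa _; rewrite lte_fin ltrDl.
by move=> /ereal_inf_lt[_ [x Sx <-] /ltW]; exists x.
Qed.

End ExtendedReals.

(** * Lower semicontinuity relative to a set *)

Definition lsc_at (R : realType) (T : topologicalType) (D : set T)
    (f : T -> \bar R) (x : T) : Prop :=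
  forall a : R, (a%:E < f x)%E -> \forall y \near x, D y -> (a%:E < f y)%E.

Section LowerSemicontinuity.
Variables (R : realType) (T : topologicalType) (D : set T).
Implicit Types (f g : T -> \bar R) (x : T).

Lemma lsc_at_cst (r : \bar R) x : lsc_at D (fun=> r) x.
Proof. by move=> a ar; apply: nearW. Qed.

Lemma lsc_atD f g x : lsc_at D f x -> lsc_at D g x ->
  lsc_at D (fun y => f y + g y)%E x.
Proof.
move=> lf lg b /lte_fin_split[b1 [b2 [<- /lf N1 /lg N2]]].
by apply: filterS (filterI N1 N2) => y [H1 H2] Dy; rewrite EFinD lteD ?H1 ?H2.
Qed.

Lemma lsc_at_sum (I : Type) (s : seq I) (g : I -> T -> \bar R) x :
  (forall i, lsc_at D (g i) x) -> lsc_at D (fun y => \sum_(i <- s) g i y)%E x.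
Proof.
move=> lg; elim: s => [|i s IH].
  by under eq_fun do rewrite big_nil; exact: lsc_at_cst.
by under eq_fun do rewrite big_cons; exact: lsc_atD.
Qed.

Lemma lsc_at_pmull (c : R) g x : 0 <= c -> lsc_at D g x ->
  lsc_at D (fun y => c%:E * g y)%E x.
Proof.
rewrite le_eqVlt => /predU1P[<- _|c0 lg].
  by under eq_fun do rewrite mul0e; exact: lsc_at_cst.
move=> b; rewrite lte_fin_pmull // => /lg.
by apply: filterS => y H Dy; rewrite lte_fin_pmull // H.
Qed.

Lemma lsc_at_comp (S : topologicalType) (E : set S) (phi : T -> S)
    (f : S -> \bar R) x :
  {homo phi : y / D y >-> E y} -> {for x, continuous phi} ->
  lsc_at E f (phi x) -> lsc_at D (f \o phi) x.
Proof.
move=> DE phic lf a /lf /phic N.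
have : \forall y \near x, E (phi y) -> (a%:E < f (phi y))%E := N.
by apply: filterS => y H /DE /H.
Qed.

Lemma lsc_compact_bounded_below f : compact D ->
  (forall x, D x -> -oo < f x)%E -> (forall x, D x -> lsc_at D f x) ->
  exists m : R, forall x, D x -> (m%:E <= f x)%E.
Proof.
move=> coD fNy lscf; apply: contrapT => unbounded.
pose B r := [set x | D x /\ (f x < r%:E)%E].
have below r : B r !=set0.
  apply: contrapT => none; apply: unbounded; exists r => x Dx.
  by rewrite leNgt; apply/negP => fx; apply: none; exists x.
have : Filter (filter_from setT B).
  apply: filter_from_filter; first by exists 0.
  move=> r s _ _; exists (Num.min r s) => // x [Dx fx].
  by split; split => //; apply: (lt_le_trans fx); rewrite lee_fin ge_min lexx ?orbT.
move=> /filter_from_proper /(_ (fun r _ => below r)) FB.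
have [|x [Dx clx]] := coD _ FB; first by exists 0 => // x [].
have [b bx] : exists b : R, (b%:E < f x)%E.
  case: (f x) (fNy x Dx) => [r _| _|//]; last by exists 0; exact: ltey.
  by exists (r - 1); rewrite lte_fin; lra.
have FBb : filter_from setT B (B b) by exists b.
have [y [[Dy fy] /(_ Dy) by_]] := clx _ _ FBb (lscf x Dx b bx).
by have := lt_trans by_ fy; rewrite ltxx.
Qed.

End LowerSemicontinuity.

(** * A minimax inequality *)

(* A point u with u.2 <= c < u.1 forces the weight t to be at least
   (c - u.2) / (u.1 - u.2); one with u.1 <= c < u.2 forces it to be at most
   (u.2 - c) / (u.2 - u.1).  The supremum of the lower constraints meets every
   upper one, because a violation would produce a mixture of two points of S
   lying in the quadrant below (c, c). *)
Lemma separating_weight (R : realType) (S : set (R * R)) (c : R) :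
  (forall u v th, S u -> S v -> 0 <= th <= 1 ->
     c < th * u.1 + (1 - th) * v.1 \/ c < th * u.2 + (1 - th) * v.2) ->
  exists2 t, 0 <= t <= 1 & forall u, S u -> c <= t * u.1 + (1 - t) * u.2.
Proof.
move=> Sout.
have out u : S u -> c < u.1 \/ c < u.2.
  by move=> Su; have := Sout u u 1 Su Su; rewrite ler01 lexx subrr !mul0r !addr0 !mul1r; apply.
pose E := [set s | s = 0 \/ exists2 u, S u & u.2 <= c /\ s = (c - u.2) / (u.1 - u.2)].
have E1 : ubound E 1.
  move=> s [->|[u Su [u2c ->]]]; first exact: ler01.
  by case: (out u Su) => cu; [rewrite ler_pdivrMr|]; lra.
have supE : has_sup E by split; [exists 0; left|exists 1].
have supE01 : 0 <= sup E <= 1.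
  by rewrite (sup_upper_bound supE) ?(ge_sup _ E1) //; [exists 0|]; left.
exists (sup E) => // -[g k] Su /=.
have [kc|ck] := leP k c.
  have cg : c < g by case: (out _ Su) => /=; lra.
  have : (c - k) / (g - k) <= sup E by apply: sup_upper_bound => //; right; exists (g, k).
  by rewrite ler_pdivrMr; nra.
have [gc|cg] := leP g c; last by nra.
suff : sup E <= (k - c) / (k - g) by rewrite ler_pdivlMr; nra.
apply: ge_sup; first by exists 0; left.
move=> s [->|[[g' k'] Su' /= [k'c ->]]]; first by rewrite divr_ge0 //; lra.
have cg' : c < g' by case: (out _ Su') => /=; lra.
pose th := (g' - c) / (g' - g).
have th01 : 0 <= th <= 1 by rewrite divr_ge0 ?ler_pdivrMr /=; lra.
have gth : th * g + (1 - th) * g' = c by rewrite /th; field; lra.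
have : c < th * k + (1 - th) * k'.
  by case: (Sout (g, k) (g', k') th Su Su' th01) => /=; rewrite ?gth ?ltxx.
have -> : th * k + (1 - th) * k' = ((g' - c) * k + (c - g) * k') / (g' - g).
  by rewrite /th; field; lra.
rewrite ltr_pdivlMr; last lra.
move=> hk; rewrite ler_pdivrMr; last lra.
by rewrite mulrAC ler_pdivlMr; [nra|lra].
Qed.

Definition mix_closed (R : realType) (T : Type) (mixT : R -> T -> T -> T)
    (H : set T) : Prop :=
  forall t x y, 0 <= t <= 1 -> H x -> H y -> H (mixT t x y).

Definition mix_convex (R : realType) (T : Type) (mixT : R -> T -> T -> T)
    (H : set T) (f : T -> \bar R) : Prop :=
  forall t x y, 0 <= t <= 1 -> H x -> H y ->
    (f (mixT t x y) <= t%:E * f x + (1 - t)%:E * f y)%E.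

Lemma mix_convex_pair_weight (R : realType) (T : Type) (mixT : R -> T -> T -> T)
    (H : set T) (G K : T -> \bar R) (c m : R) :
  mix_closed mixT H -> mix_convex mixT H G -> mix_convex mixT H K ->
  (forall h, H h -> (m%:E <= G h)%E /\ (m%:E <= K h)%E) ->
  (forall h, H h -> (c%:E < G h)%E \/ (c%:E < K h)%E) ->
  forall eta, 0 < eta -> exists2 t, 0 <= t <= 1 &
    forall h, H h -> ((c - eta)%:E <= t%:E * G h + (1 - t)%:E * K h)%E.
Proof.
move=> Hmix Gconv Kconv Hm Hc.
wlog mc : m Hm / m <= c.
  move=> /(_ (Num.min m c)) + eta eta0; apply => //; last by rewrite ge_min lexx orbT.
  move=> h /Hm[Gh Kh]; have mmin : ((Num.min m c)%:E <= m%:E)%E by rewrite lee_fin ge_min lexx.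
  by split; apply: le_trans mmin _.
move=> eta eta0.
pose S := [set u : R * R | exists2 h, H h & G h = u.1%:E /\ K h = u.2%:E].
have [ts ts01 sep] : exists2 ts, 0 <= ts <= 1 &
    forall u, S u -> c <= ts * u.1 + (1 - ts) * u.2.
  apply: separating_weight => -[g1 k1] [g2 k2] th [h1 H1 [G1 K1]] [h2 H2 [G2 K2]] th01 /=.
  have := Gconv th h1 h2 th01 H1 H2; have := Kconv th h1 h2 th01 H1 H2.
  rewrite G1 G2 K1 K2 -!EFinM -!EFinD => Kmix Gmix.
  case: (Hc _ (Hmix th h1 h2 th01 H1 H2)) => [/lt_le_trans/(_ Gmix)|/lt_le_trans/(_ Kmix)];
    rewrite lte_fin; [left|right] => //.
pose d := Num.min 1 (eta / (c - m + 1)).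
have d0 : 0 < d by rewrite lt_min ltr01 divr_gt0 //; lra.
have d1 : d <= 1 by rewrite ge_min lexx.
have dcm : d * (c - m) <= eta.
  have : d <= eta / (c - m + 1) by rewrite ge_min lexx orbT.
  rewrite ler_pdivlMr; nra.
(* Moving ts towards 1/2 keeps both weights positive, so that an infinite
   value of G or K is never multiplied by 0; this costs at most d (c - m). *)
pose t := (1 - d) * ts + d / 2.
have t0 : 0 < t by rewrite /t; nra.
have t1 : t < 1 by rewrite /t; nra.
exists t; first by rewrite !ltW.
move=> h Hh; have [Gm Km] := Hm h Hh.
case EG: (G h) Gm => [g| |] // Gm; case EK: (K h) Km => [k| |] // Km.
- have := sep (g, k) (ex_intro2 _ _ h Hh (conj EG EK)); rewrite /= -!EFinM -EFinD lee_fin.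
  rewrite !lee_fin in Gm Km.
  have -> : t * g + (1 - t) * k = (1 - d) * (ts * g + (1 - ts) * k) + d * ((g + k) / 2).
    by rewrite /t; field.
  nra.
- by rewrite gt0_muley ?lte_fin ?subr_gt0 // addey ?leey.
- by rewrite gt0_muley ?lte_fin // addye ?leey // gt0_muley ?lte_fin ?subr_gt0.
- by rewrite !gt0_muley ?lte_fin ?subr_gt0 // addey ?leey.
Qed.

Section Minimax.
Variables (R : realType) (T : topologicalType) (P : Type).
Variables (mixT : R -> T -> T -> T) (mixP : R -> P -> P -> P).
Variables (H0 : set T) (U : set P) (F : T -> P -> \bar R) (M : R).
Hypothesis U_mix_closed : mix_closed mixP U.
Hypothesis F_convex : forall p, U p -> mix_convex mixT H0 (F^~ p).
Hypothesis F_concave : forall h t p q, H0 h -> 0 <= t <= 1 -> U p -> U q ->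
  (t%:E * F h p + (1 - t)%:E * F h q <= F h (mixP t p q))%E.
Hypothesis F_bounded_below : forall h p, H0 h -> U p -> (M%:E <= F h p)%E.

Lemma minimax_pair (H : set T) p q (a eps : R) :
  H `<=` H0 -> mix_closed mixT H -> U p -> U q -> 0 < eps ->
  (forall t, 0 <= t <= 1 -> (ereal_inf (F^~ (mixP t p q) @` H) <= a%:E)%E) ->
  exists2 h, H h & (F h p <= (a + eps)%:E)%E /\ (F h q <= (a + eps)%:E)%E.
Proof.
move=> sH Hmix Up Uq eps0 inf_mix; apply: contrapT => none.
have above h : H h -> ((a + eps)%:E < F h p)%E \/ ((a + eps)%:E < F h q)%E.
  move=> Hh; rewrite !ltNge; apply: contrapT => /not_orP[/negP/negbNE Fp /negP/negbNE Fq].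
  by apply: none; exists h.
have convex_sub r : U r -> mix_convex mixT H (F^~ r).
  by move=> Ur t x y t01 Hx Hy; apply: F_convex => //; apply: sH.
have [t t01 mix_ge] := mix_convex_pair_weight Hmix (convex_sub p Up) (convex_sub q Uq)
  (fun h Hh => conj (F_bounded_below (sH _ Hh) Up) (F_bounded_below (sH _ Hh) Uq))
  above (divr_gt0 eps0 (ltr0n _ 2)).
have : ((a + eps - eps / 2)%:E <= ereal_inf (F^~ (mixP t p q) @` H))%E.
  apply: le_ereal_inf_tmp => _ [h Hh <-].
  by apply: le_trans (mix_ge h Hh) _; apply: F_concave => //; apply: sH.
move=> /le_trans /(_ (inf_mix t t01)); rewrite lee_fin; lra.
Qed.

Lemma minimax_seq (ps : seq P) : List.Forall U ps ->
  forall (H : set T) (a eps : R), H `<=` H0 -> mix_closed mixT H -> H !=set0 ->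
  (forall p, U p -> (ereal_inf (F^~ p @` H) <= a%:E)%E) -> 0 < eps ->
  exists2 h, H h & List.Forall (fun p => F h p <= (a + eps)%:E)%E ps.
Proof.
elim: ps => [_ H a eps _ _ [h Hh] _ _|p qs IH /List.Forall_cons_iff[Up Uqs] H a eps sH Hmix _ infH eps0].
  by exists h.
pose H' := [set h | H h /\ (F h p <= (a + eps)%:E)%E].
have sH' : H' `<=` H0 by move=> h [/sH].
have H'mix : mix_closed mixT H'.
  move=> t x y t01 [Hx Fx] [Hy Fy]; split; first exact: Hmix.
  exact: le_trans (F_convex Up t01 (sH _ Hx) (sH _ Hy)) (lee_mix_le t01 Fx Fy).
have eps2 : 0 < eps / 2 by rewrite divr_gt0.
have infH' q : U q -> (ereal_inf (F^~ q @` H') <= (a + eps / 2)%:E)%E.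
  move=> Uq; have [h Hh [Fp Fq]] :=
    minimax_pair sH Hmix Up Uq eps2 (fun t t01 => infH _ (U_mix_closed t01 Up Uq)).
  apply: ge_ereal_inf; exists (F h q) => //; exists h => //; split => //.
  by apply: le_trans Fp _; rewrite lee_fin lerD2l ler_pdivrMr //; lra.
have H'0 : H' !=set0.
  by have [h Hh Fh] := ereal_inf_le_approx (infH p Up) eps0; exists h.
have [h [Hh Fhp] Fqs] := IH Uqs H' (a + eps / 2) (eps / 2) sH' H'mix H'0 infH' eps2.
by exists h => //; constructor => //; rewrite -addrA -splitr in Fqs.
Qed.

Hypothesis H0_compact : compact H0.
Hypothesis H0_mix_closed : mix_closed mixT H0.
Hypothesis H0_neq0 : H0 !=set0.
Hypothesis F_lsc : forall p h, U p -> H0 h -> lsc_at H0 (F^~ p) h.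

(* The rules that are (a + e)-good for the finitely many p in s form a filter
   base, proper by [minimax_seq]; a cluster point in the compact H0 is then
   a-good for every p in U by lower semicontinuity. *)
Lemma minimax_fin (a : R) :
  (forall p, U p -> (ereal_inf (F^~ p @` H0) <= a%:E)%E) ->
  exists2 h, H0 h & forall p, U p -> (F h p <= a%:E)%E.
Proof.
move=> infH0.
pose good e h p := (F h p <= (a + e)%:E)%E.
have good_le e e' h p : e <= e' -> good e h p -> good e' h p.
  by move=> ee' /le_trans; apply; rewrite lee_fin lerD2l.
pose D := [set i : seq P * R | List.Forall U i.1 /\ 0 < i.2].
pose B (i : seq P * R) := [set h | H0 h /\ List.Forall (good i.2 h) i.1].
have FB : Filter (filter_from D B).
  apply: filter_from_filter; first by exists ([::], 1).
  move=> [s1 e1] [s2 e2] [U1 e10] [U2 e20]; exists (s1 ++ s2, Num.min e1 e2).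
    by split; [apply/List.Forall_app|rewrite /= lt_min e10 e20].
  move=> h [H0h /List.Forall_app[F1 F2]]; split; split => //=.
    by apply: List.Forall_impl F1 => p; apply: good_le; rewrite ge_min lexx.
  by apply: List.Forall_impl F2 => p; apply: good_le; rewrite ge_min lexx orbT.
have {}FB : ProperFilter (filter_from D B).
  apply: filter_from_proper => -[s e] [Us e0].
  by have [h] := minimax_seq Us (@subset_refl _ _) H0_mix_closed H0_neq0 infH0 e0; exists h.
have [|h [H0h clh]] := H0_compact FB.
  by exists ([::], 1) => [|h []//]; split => //; constructor.
exists h => // p Up; rewrite leNgt; apply/negP => /lte_fin_dense[b ab bF].
have FBp : filter_from D B (B ([:: p], b - a)).
  by exists ([:: p], b - a) => //; split => /=; [constructor|rewrite subr_gt0].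
have [h' [[H0h' /List.Forall_cons_iff[Fh' _]] /(_ H0h')]] := clh _ _ FBp (F_lsc Up H0h bF).
by rewrite /good subrKC in Fh'; rewrite ltNge Fh'.
Qed.

Theorem minimax :
  exists2 h, H0 h & forall p, U p ->
    (F h p <= ereal_sup [set ereal_inf (F^~ q @` H0) | q in U])%E.
Proof.
have [h H0h] := H0_neq0.
set v := ereal_sup _; case Ev: v => [a| |].
- have [|h' H0h' Fh'] := @minimax_fin a.
    by move=> p Up; rewrite -Ev; apply: ereal_sup_ubound; exists p.
  by exists h'.
- by exists h => // p _; exact: leey.
exists h => // p Up; exfalso.
have : (ereal_inf (F^~ p @` H0) <= v)%E by apply: ereal_sup_ubound; exists p.
rewrite Ev leeNy_eq => /eqP infNy.
have : (M%:E <= ereal_inf (F^~ p @` H0))%E.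
  by apply: le_ereal_inf_tmp => _ [h'' H0h'' <-]; exact: F_bounded_below.
by rewrite infNy.
Qed.
End Minimax.

(** * Classification rules and their loss *)

Lemma simplex_mix_closed (R : realType) (Z : finType) :
  mix_closed (@mix R Z) (@simplex R Z).
Proof.
move=> t q1 q2 /andP[t0 t1] [q10 q11] [q20 q21]; split.
  by move=> z; rewrite /mix addr_ge0 ?mulr_ge0 ?subr_ge0.
by rewrite /mix big_split /= -!mulr_sumr q11 q21; ring.
Qed.

Section PointwiseTopology.
Import ArrowAsProduct.
Variable R : realType.

Lemma simplex_compact (Y : finType) : compact (@simplex R Y : set {ptws Y -> R}).
Proof.
have proj_cont y : continuous (fun q : {ptws Y -> R} => q y).
  exact: (@proj_continuous _ (fun _ : Y => R) y).
have box : compact [set q : {ptws Y -> R} | forall y, `[0, 1]%classic (q y)].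
  exact: (@tychonoff Y (fun _ => R) _ (fun _ => @segment_compact R 0 1)).
apply: (subclosed_compact _ box); last first.
  move=> q [q0 q1] y; rewrite /= in_itv /= q0 -q1 (bigD1 y) //= lerDl.
  by apply: sumr_ge0 => z _; exact: q0.
have -> : @simplex R Y = \bigcap_(y in setT) ((fun q : {ptws Y -> R} => q y) @^-1` [set x | 0 <= x])
    `&` ((fun q : {ptws Y -> R} => \sum_y q y) @^-1` [set 1]).
  by apply/seteqP; split => q [q0 q1]; split => // y; [move=> _|]; exact: q0.
apply: closedI.
  apply: closed_bigI => y _; apply: preimage_closed; last exact: closed_ge.
  by move=> q _; exact: proj_cont.
apply: preimage_closed; last exact: closed_eq.
move=> q _; apply: (@continuous_big R Y +%R 0 xpredT (@add_continuous R)).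
by move=> y _; exact: proj_cont.
Qed.

Variables (X Y : finType).

Definition rules : set {ptws X -> {ptws Y -> R}} := [set h | rule h].

Definition mix_rule (t : R) (h1 h2 : X -> Y -> R) : X -> Y -> R :=
  fun x => mix t (h1 x) (h2 x).

Lemma rules_compact : compact rules.
Proof. exact: (@tychonoff X _ _ (fun _ => @simplex_compact Y)). Qed.

Lemma rules_mix_closed : mix_closed mix_rule rules.
Proof. by move=> t h1 h2 t01 r1 r2 x; exact: simplex_mix_closed. Qed.

Lemma score_lsc_at_rule (L : (Y -> R) -> Y -> \bar R) x y h :
  lsc_on (@simplex R Y : set {ptws Y -> R}) (fun q => L q y) -> rule h ->
  lsc_at rules (fun h' : {ptws X -> {ptws Y -> R}} => L (h' x) y) h.
Proof.
move=> Llsc rh; apply: (@lsc_at_comp _ _ _ _ (@simplex R Y) (fun h' => h' x) (fun q => L q y)).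
- by move=> h'; apply.
- exact: (@proj_continuous X (fun _ => {ptws Y -> R}) x).
- exact: Llsc.
Qed.

End PointwiseTopology.

Section Loss.
Variables (R : realType) (X Y : finType) (L : (Y -> R) -> Y -> \bar R).
Hypothesis L_score : score_function L.
Implicit Types (h : X -> Y -> R) (p q : X * Y -> R) (r : Y -> R).

Lemma score_gtNy r y : simplex r -> (-oo < L r y)%E.
Proof. by rewrite ltNye; case: L_score => + _; apply. Qed.

Lemma loss_term_gtNy h p z : rule h -> 0 <= p z -> (-oo < (p z)%:E * L (h z.1) z.2)%E.
Proof. by move=> rh p0; rewrite mule_ge0_gtNy // score_gtNy. Qed.

Lemma loss_mix_convex p : (forall z, 0 <= p z) ->
  mix_convex (@mix_rule R X Y) [set h | rule h] (loss L ^~ p).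
Proof.
move=> p0 t h1 h2 t01 r1 r2; have [_ [_ Lconv]] := L_score.
have [t0 t1] : 0 <= t /\ 0 <= 1 - t by case/andP: t01 => ? ?; rewrite subr_ge0.
rewrite /loss !fin_num_sume_distrr // -?big_split /=; last 2 first.
- by move=> ? ? _ _; apply: gtNy_adde_def; apply: loss_term_gtNy.
- by move=> ? ? _ _; apply: gtNy_adde_def; apply: loss_term_gtNy.
apply: lee_sum => z _.
apply: le_trans (lee_wpmul2l _ (Lconv z.2 _ _ t (r1 z.1) (r2 z.1) t01)) _; first by rewrite lee_fin.
rewrite muleDr // ?(muleCA (p z)%:E) //.
by apply: gtNy_adde_def; apply: mule_ge0_gtNy => //; exact: score_gtNy.
Qed.

Lemma loss_mix_linear t p q h : 0 <= t <= 1 ->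
  (forall z, 0 <= p z) -> (forall z, 0 <= q z) -> rule h ->
  loss L h (mix t p q) = (t%:E * loss L h p + (1 - t)%:E * loss L h q)%E.
Proof.
move=> t01 p0 q0 rh.
have [t0 t1] : 0 <= t /\ 0 <= 1 - t by case/andP: t01 => ? ?; rewrite subr_ge0.
rewrite /loss !fin_num_sume_distrr // -?big_split /=; last 2 first.
- by move=> ? ? _ _; apply: gtNy_adde_def; apply: loss_term_gtNy.
- by move=> ? ? _ _; apply: gtNy_adde_def; apply: loss_term_gtNy.
apply: eq_bigr => z _.
by rewrite /mix EFinD ge0_muleDl ?lee_fin ?mulr_ge0 // !EFinM !muleA.
Qed.

Lemma loss_bounded_below :
  exists M : R, forall h p, rule h -> simplex p -> (M%:E <= loss L h p)%E.
Proof.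
have [_ [Llsc _]] := L_score.
have /choice[m Lm] y : exists m : R, forall r, simplex r -> (m%:E <= L r y)%E.
  apply: (lsc_compact_bounded_below (@simplex_compact R Y)).
    by move=> r; exact: score_gtNy.
  exact: Llsc.
pose M := - \sum_y `|m y|.
have ML r y : simplex r -> (M%:E <= L r y)%E.
  move=> sr; apply: le_trans (Lm y r sr); rewrite lee_fin /M (bigD1 y) //= opprD.
  have : 0 <= \sum_(i | i != y) `|m i| by apply: sumr_ge0.
  have : - `|m y| <= m y by exact: lerNnormlW.
  lra.
exists M => h p rh [p0 p1].
apply: (@le_trans _ _ (\sum_(z : X * Y) (p z)%:E * M%:E)%E).
  by rewrite sumEFin -mulr_suml p1 mul1r.
by apply: lee_sum => z _; apply: lee_wpmul2l; rewrite ?lee_fin //; exact: ML.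
Qed.

Lemma loss_lsc_at p h : (forall z, 0 <= p z) -> rule h ->
  lsc_at (@rules R X Y) (fun h' : {ptws X -> {ptws Y -> R}} => loss L h' p) h.
Proof.
move=> p0 rh; have [_ [Llsc _]] := L_score.
apply: lsc_at_sum => z; apply: lsc_at_pmull => //.
exact: score_lsc_at_rule.
Qed.

End Loss.

Lemma MRC_worst_loss_le_entropyU (R : realType) (X Y : finType)
    (L : (Y -> R) -> Y -> \bar R) (U : set (X * Y -> R)) (h : X -> Y -> R) :
  score_function L -> U `<=` @simplex R (X * Y)%type -> convex_set_of U ->
  MRC L U h -> (worst_loss L U h <= entropyU L U)%E.
Proof.
move=> L_score sU cU [rh h_min].
have p0 p : U p -> forall z, 0 <= p z by move=> /sU[].
have [M LM] := loss_bounded_below X L_score.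
have [h0 rh0 h0U] : exists2 h0, @rules R X Y h0 &
    forall p, U p -> (loss L h0 p <= entropyU L U)%E.
  rewrite /entropyU /entropy.
  apply: (@minimax _ {ptws X -> {ptws Y -> R}} _ (@mix_rule R X Y) (@mix R _) _ U
    (fun h p => loss L h p) M).
  - by move=> t p q t01 Up Uq; exact: cU.
  - by move=> p Up t h1 h2; exact: (@loss_mix_convex _ _ _ _ L_score _ (p0 p Up) t h1 h2).
  - move=> h' t p q rh' t01 Up Uq /=.
    by rewrite (loss_mix_linear L_score t01 (p0 p Up) (p0 q Uq) rh').
  - by move=> h' p rh' Up; exact: LM (sU _ Up).
  - exact: rules_compact.
  - exact: rules_mix_closed.
  - by exists h.
  - by move=> p h' Up rh'; exact: (@loss_lsc_at _ _ _ _ L_score p h' (p0 p Up) rh').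
apply: le_trans (h_min h0 rh0) _.
by apply: ge_ereal_sup => _ [p Up <-]; exact: h0U.
Qed.

Theorem corollary1 (R : realType) (X Y : finType)
  (L : (Y -> R) -> Y -> \bar R) (U : set (X * Y -> R))
  (pstar : X * Y -> R) (hU : X -> Y -> R) :
  (0 < #|X|)%N -> (0 < #|Y|)%N ->
  score_function L ->
  U `<=` simplex (R:=R) (Z:=(X * Y)%type) ->
  convex_set_of U -> compact (U : set {ptws (X * Y)%type -> R}) ->
  simplex pstar ->
  MRC L U hU ->
  U pstar ->
  ((bayes_risk L pstar <= entropyU L U)%E /\
   (risk L pstar hU <= entropyU L U)%E) /\
  (entropy L pstar = entropyU L U ->
     (forall h, MRC L U h -> bayes_classifier L pstar h) /\
     bayes_risk L pstar = risk L pstar hU /\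
     risk L pstar hU = entropyU L U).
Proof.
move=> _ _ L_score sU cU _ _ hU_MRC Upstar.
have risk_le h : MRC L U h -> (risk L pstar h <= entropyU L U)%E.
  move=> h_MRC; apply: le_trans (MRC_worst_loss_le_entropyU L_score sU cU h_MRC).
  by apply: ereal_sup_ubound; exists pstar.
have bayes_le : (bayes_risk L pstar <= entropyU L U)%E.
  by apply: ereal_sup_ubound; exists pstar.
have bayes_lb h : rule h -> (bayes_risk L pstar <= risk L pstar h)%E.
  by move=> rh; apply: ereal_inf_lbound; exists h.
split=> [|maxent]; first by split; [|exact: risk_le].
have risk_hU : risk L pstar hU = entropyU L U.
  apply/eqP; rewrite eq_le risk_le //= -maxent; apply: bayes_lb; exact: hU_MRC.1.
split; last by rewrite risk_hU -maxent.
move=> h h_MRC; split=> [|h' rh']; first exact: h_MRC.1.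
by apply: le_trans (risk_le h h_MRC) _; rewrite -maxent; exact: bayes_lb.
Qed.
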